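(* Let $A,B\in\mathbb{C}^{m\times n}$. The following are equivalent: (a) $A\ *\!\!\le B$; (b) $A\le^{\diamond}B$ and $A^*A=A^*B$; (c) $A\le^{\diamond}B$ and $A^\dagger A=A^\dagger B$; (d) $A\le^{\diamond}B$ and $A^*B$ is Hermitian.
   Context: $M^*$ is the conjugate transpose, $M^\dagger$ the Moore–Penrose inverse, $\mathcal{R}(M)$ the column space. Left star order: $A\ *\!\!\le B$ iff $A^*A=A^*B$ and $\mathcal{R}(A)\subseteq\mathcal{R}(B)$. Diamond order: $A\le^{\diamond}B$ iff $\mathcal{R}(A)\subseteq\mathcal{R}(B)$, $\mathcal{R}(A^* )\subseteq\mathcal{R}(B^* )$, and $AB^*A=AA^*A$. *)

From HB Require Import structures.
From mathcomp Require Import all_boot all_order all_algebra.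
From Stdlib Require Import ClassicalEpsilon.
Set Implicit Arguments. Unset Strict Implicit. Unset Printing Implicit Defensive.
Import Order.TTheory GRing.Theory Num.Theory.
Local Open Scope ring_scope.

Section Defs.
Variable C : numClosedFieldType.

Definition ctrmx m n (M : 'M[C]_(m, n)) : 'M[C]_(n, m) := (map_mx Num.conj M)^T.

(* column space inclusion  R(A) ⊆ R(B)  (columns of A are combinations of columns of B) *)
Definition colspace_sub m n p (A : 'M[C]_(m, n)) (B : 'M[C]_(m, p)) : bool :=
  (A^T <= B^T)%MS.

Definition is_MP m n (A : 'M[C]_(m, n)) (X : 'M[C]_(n, m)) : Prop :=
  [/\ A *m X *m A = A, X *m A *m X = X,
      ctrmx (A *m X) = A *m X & ctrmx (X *m A) = X *m A].

(* Moore–Penrose inverse A^† (the unique solution of the Penrose equations) *)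
Definition mpinv m n (A : 'M[C]_(m, n)) : 'M[C]_(n, m) :=
  epsilon (inhabits 0) (is_MP A).

Definition left_star_le m n (A B : 'M[C]_(m, n)) : Prop :=
  ctrmx A *m A = ctrmx A *m B /\ colspace_sub A B.

Definition diamond_le m n (A B : 'M[C]_(m, n)) : Prop :=
  [/\ colspace_sub A B, colspace_sub (ctrmx A) (ctrmx B)
    & A *m ctrmx B *m A = A *m ctrmx A *m A].

Definition is_hermitian n (M : 'M[C]_n) : Prop := ctrmx M = M.
End Defs.

(* Write X for the Moore-Penrose inverse of A.  Its Penrose equations give
   A^* = A^* A X and X = X X^* A^*, so left-multiplying by A^* or by X gives
   equivalent constraints: A^* A = A^* B iff X A = X B, and either makes
   A^* B = A^* A Hermitian.  Conversely, if A^* B is Hermitian and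
   A B^* A = A A^* A, then M := (A - B)^* A is Hermitian with A M = 0, so
   M M^* = M^2 = 0, whence M = 0, i.e. A^* A = A^* B.  The column-space inclusion
   for A^* and B^* required by the diamond order comes from A^* = B^* (A X). *)

From HB Require Import structures.
From mathcomp Require Import all_boot all_order all_algebra.
From Stdlib Require Import ClassicalEpsilon.
Set Implicit Arguments. Unset Strict Implicit.
Import GRing.Theory Num.Theory.
Local Open Scope ring_scope.

Section ConjugateTranspose.
Variable C : numClosedFieldType.

Lemma ctrmxK m n (M : 'M[C]_(m, n)) : ctrmx (ctrmx M) = M.
Proof. by apply/matrixP => i j; rewrite !mxE conjCK. Qed.

Lemma ctrmxM m n p (A : 'M[C]_(m, n)) (B : 'M[C]_(n, p)) :
  ctrmx (A *m B) = ctrmx B *m ctrmx A.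
Proof. by rewrite /ctrmx map_mxM trmx_mul. Qed.

Lemma ctrmxB m n (A B : 'M[C]_(m, n)) : ctrmx (A - B) = ctrmx A - ctrmx B.
Proof. by apply/matrixP => i j; rewrite !mxE rmorphB. Qed.

Lemma ctrmx_inv n (P : 'M[C]_n) : ctrmx (invmx P) = invmx (ctrmx P).
Proof. by rewrite /ctrmx map_invmx trmx_inv. Qed.

Lemma mxrank_ctrmx m n (M : 'M[C]_(m, n)) : \rank (ctrmx M) = \rank M.
Proof. by rewrite /ctrmx mxrank_tr mxrank_map. Qed.

Lemma hermitian_gram m n (M : 'M[C]_(m, n)) : is_hermitian (ctrmx M *m M).
Proof. by rewrite /is_hermitian ctrmxM ctrmxK. Qed.

(* The diagonal entries of M M^* are the squared row norms of M. *)
Lemma mulmx_ctrmx_eq0 m n (M : 'M[C]_(m, n)) : M *m ctrmx M = 0 -> M = 0.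
Proof.
move=> MM0; apply/matrixP => i j.
have := congr1 (fun N : 'M_m => N i i) MM0; rewrite !mxE.
under eq_bigr => k _ do rewrite !mxE -normCK.
move/psumr_eq0P => /(_ (fun k _ => exprn_ge0 2 (normr_ge0 _))) /(_ j isT).
by move/eqP; rewrite sqrf_eq0 normr_eq0 => /eqP.
Qed.

Lemma hermitian_sqr_eq0 n (M : 'M[C]_n) :
  is_hermitian M -> M *m M = 0 -> M = 0.
Proof. by move=> hM MM0; apply: mulmx_ctrmx_eq0; rewrite hM. Qed.

Lemma unitmx_gram r k (G : 'M[C]_(r, k)) : row_free G -> G *m ctrmx G \in unitmx.
Proof.
move=> freeG; rewrite -row_free_unit -kermx_eq0; apply/eqP.
set K := kermx _.
have KG0 : (K *m G) *m ctrmx (K *m G) = 0.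
  by rewrite ctrmxM !mulmxA -(mulmxA K) mulmx_ker mul0mx.
by apply: (row_free_inj freeG); rewrite (mulmx_ctrmx_eq0 KG0) mul0mx.
Qed.

End ConjugateTranspose.

Section MoorePenrose.
Variable C : numClosedFieldType.

Lemma is_MP_full_rank_factor m n r (F : 'M[C]_(m, r)) (G : 'M[C]_(r, n)) :
  row_free (ctrmx F) -> row_free G ->
  is_MP (F *m G) (ctrmx G *m invmx (G *m ctrmx G) *m invmx (ctrmx F *m F) *m ctrmx F).
Proof.
move=> freeF freeG.
set P := ctrmx F *m F; set Q := G *m ctrmx G.
have uP : P \in unitmx by rewrite /P -{2}(ctrmxK F); apply: unitmx_gram.
have uQ : Q \in unitmx by apply: unitmx_gram.
have hP : ctrmx P = P by rewrite /P ctrmxM ctrmxK.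
have hQ : ctrmx Q = Q by rewrite /Q ctrmxM ctrmxK.
have AX : F *m G *m (ctrmx G *m invmx Q *m invmx P *m ctrmx F)
          = F *m invmx P *m ctrmx F.
  by rewrite -!mulmxA; congr (F *m _); rewrite !mulmxA mulmxV // mul1mx.
have XA : (ctrmx G *m invmx Q *m invmx P *m ctrmx F) *m (F *m G)
          = ctrmx G *m invmx Q *m G.
  by rewrite !mulmxA; congr (_ *m G); rewrite -!mulmxA mulVmx // mulmx1.
split.
- rewrite AX -!mulmxA; congr (F *m _).
  by rewrite [ctrmx F *m _]mulmxA -/P mulmxA mulVmx // mul1mx.
- rewrite XA -!mulmxA; congr (ctrmx G *m (invmx Q *m _)).
  by rewrite mulmxA -/Q mulmxA mulmxV // mul1mx.
- by rewrite AX !ctrmxM ctrmxK ctrmx_inv hP mulmxA.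
- by rewrite XA !ctrmxM ctrmxK ctrmx_inv hQ mulmxA.
Qed.

Lemma mpinvP m n (A : 'M[C]_(m, n)) : is_MP A (mpinv A).
Proof.
apply: epsilon_spec.
have freeF : row_free (ctrmx (col_base A)).
  by rewrite /row_free mxrank_ctrmx; have := col_base_full A.
have := is_MP_full_rank_factor freeF (row_base_free A).
by rewrite mulmx_base; apply: ex_intro.
Qed.

Lemma gram_mpinv m n (A : 'M[C]_(m, n)) : ctrmx A *m A *m mpinv A = ctrmx A.
Proof.
have [AXA _ hAX _] := mpinvP A.
by rewrite -mulmxA -hAX -ctrmxM AXA.
Qed.

Lemma mpinv_ctrmx m n (A : 'M[C]_(m, n)) :
  mpinv A *m ctrmx (mpinv A) *m ctrmx A = mpinv A.
Proof.
have [_ XAX hAX _] := mpinvP A.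
by rewrite -mulmxA -ctrmxM hAX mulmxA XAX.
Qed.

Lemma gram_eq_mpinv_eq m n p (A : 'M[C]_(m, n)) (B1 B2 : 'M[C]_(m, p)) :
  (ctrmx A *m B1 = ctrmx A *m B2) <-> (mpinv A *m B1 = mpinv A *m B2).
Proof.
split=> eqB.
  by rewrite -mpinv_ctrmx -!mulmxA eqB.
by rewrite -gram_mpinv -!mulmxA eqB.
Qed.

End MoorePenrose.

Section StarDiamond.
Variables (C : numClosedFieldType) (m n : nat).
Implicit Types A B : 'M[C]_(m, n).

Lemma adjoint_mulmx_gram A B :
  ctrmx A *m A = ctrmx A *m B -> ctrmx B *m A = ctrmx A *m A.
Proof.
by move=> eqAB; rewrite -[A in ctrmx B *m A]ctrmxK -ctrmxM -eqAB hermitian_gram.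
Qed.

Lemma left_star_le_diamond A B : left_star_le A B -> diamond_le A B.
Proof.
move=> [eqAB subAB]; have eqBA := adjoint_mulmx_gram eqAB.
split => //; last by rewrite -!mulmxA eqBA.
by rewrite /colspace_sub -gram_mpinv -eqBA -mulmxA trmx_mul submxMl.
Qed.

Lemma gram_eq_hermitian A B :
  ctrmx A *m A = ctrmx A *m B -> is_hermitian (ctrmx A *m B).
Proof. by move <-; apply: hermitian_gram. Qed.

Lemma diamond_hermitian_gram_eq A B :
  diamond_le A B -> is_hermitian (ctrmx A *m B) -> ctrmx A *m A = ctrmx A *m B.
Proof.
move=> [_ _ diamAB]; rewrite /is_hermitian ctrmxM ctrmxK => hAB.
pose M := ctrmx (A - B) *m A.
have hM : is_hermitian M.
  by rewrite /is_hermitian /M ctrmxM ctrmxK ctrmxB mulmxBr mulmxBl hAB.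
have AM0 : A *m M = 0 by rewrite /M ctrmxB mulmxA !mulmxBr mulmxBl diamAB subrr.
have /eqP : M = 0 by apply: hermitian_sqr_eq0; rewrite // {1}/M -mulmxA AM0 mulmx0.
by rewrite /M ctrmxB mulmxBl subr_eq0 => /eqP ->.
Qed.

End StarDiamond.

Theorem theorem4p2 (C : numClosedFieldType) (m n : nat) (A B : 'M[C]_(m, n)) :
  [<-> left_star_le A B;
       diamond_le A B /\ ctrmx A *m A = ctrmx A *m B;
       diamond_le A B /\ mpinv A *m A = mpinv A *m B;
       diamond_le A B /\ is_hermitian (ctrmx A *m B)].
Proof.
tfae.
- by move=> starAB; split; [apply: left_star_le_diamond | case: starAB].
- by move=> [diamAB eqAB]; split; last by apply/gram_eq_mpinv_eq.
- move=> [diamAB /gram_eq_mpinv_eq eqAB]; split => //.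
  exact: gram_eq_hermitian.
- move=> [diamAB hAB]; split; first exact: diamond_hermitian_gram_eq.
  by case: diamAB.
Qed.
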